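(* Let $\mathcal G=(E,\mathcal I)$ be a matroid, $c:E\to\mathbb R_{\ge0}$, $U\subseteq E$, $q\in\mathbb N$, and let $B$ be a minimum basis of $[\mathcal G\cap U]_{\le q}$ with respect to $c$. Let $\Delta\in\mathcal I$ with $|\Delta|\le q$, and let $a\in(\Delta\cap U)\setminus B$. Then there is $b\in B\setminus\Delta$ such that $\Delta-a+b\in\mathcal I$ and $c(b)\le c(a)$.
   Context: For a matroid $\mathcal G=(E,\mathcal I)$, $U\subseteq E$ and $q\in\mathbb N$, $[\mathcal G\cap U]_{\le q}$ denotes the matroid with ground set $U$ and independent sets $\{A\in\mathcal I: A\subseteq U,\ |A|\le q\}$. A basis is a maximal independent set; a minimum basis w.r.t. $c$ is a basis $B$ with $\sum_{e\in B}c(e)\le\sum_{e\in B'}c(e)$ for every basis $B'$. $A+e=A\cup\{e\}$, $A-e=A\setminus\{e\}$. *)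

From mathcomp Require Import all_boot all_order all_algebra.
Set Implicit Arguments. Unset Strict Implicit. Unset Printing Implicit Defensive.
Import Order.TTheory GRing.Theory Num.Theory.

Definition is_matroid (E : finType) (I : {set E} -> bool) : Prop :=
  [/\ I set0,
      (forall A B : {set E}, B \subset A -> I A -> I B) &
      (forall A B : {set E}, I A -> I B -> #|A| < #|B| ->
         exists2 x, x \in B :\: A & I (x |: A))].

Definition trunc_restr (E : finType) (I : {set E} -> bool) (U : {set E}) (q : nat)
  (A : {set E}) : bool := [&& I A, A \subset U & #|A| <= q].

Definition is_basis (E : finType) (J : {set E} -> bool) (U : {set E}) (B : {set E}) : Prop :=
  J B /\ B \subset U /\ (forall B' : {set E}, B' \subset U -> J B' -> B \subset B' -> B' = B).

Definition cost (E : finType) (R : numDomainType) (c : E -> R) (A : {set E}) : R :=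
  (\sum_(e in A) c e)%R.

Definition is_min_basis (E : finType) (R : numDomainType) (J : {set E} -> bool)
  (U : {set E}) (c : E -> R) (B : {set E}) : Prop :=
  is_basis J U B /\
  (forall B', is_basis J U B' -> (cost c B <= cost c B')%R).

From mathcomp Require Import all_boot all_order all_algebra.
From mathcomp Require Import zify.
Import Order.TTheory GRing.Theory Num.Theory.

Set Implicit Arguments.
Unset Strict Implicit.
Unset Printing Implicit Defensive.

(* The truncated restriction J = [G ∩ U]_{<=q} is again a
   matroid, and B is a basis of it not containing a ∈ U, so a + B is
   J-dependent and contains a J-circuit C (a minimal J-dependent set); C
   contains a and C - a ⊆ B.
   (1) For b ∈ C - a, the set a + B - b is J-independent (extend C - b inside
       C - b ∪ B) of the size of B, hence a basis; minimality of B then gives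
       c(b) <= c(a).
   (2) C - a is G-independent and either C is G-dependent or |C| > q >= |Δ|.
       In both cases (Δ - a) ∪ (C - a) contains a G-independent set larger
       than Δ - a, and augmentation yields b ∈ C \ Δ with Δ - a + b ∈ I. *)

Section Matroid.
Variables (E : finType) (K : {set E} -> bool).
Hypothesis K_matroid : is_matroid K.

Lemma indep_sub (A B : {set E}) : B \subset A -> K A -> K B.
Proof. by case: K_matroid => _ + _; apply. Qed.

Lemma indep_aug (A B : {set E}) : K A -> K B -> #|A| < #|B| ->
  exists2 x, x \in B :\: A & K (x |: A).
Proof. by case: K_matroid => _ _; apply. Qed.

Lemma indep_extend (X Y : {set E}) : K X -> K Y ->
  exists Z, [/\ K Z, X \subset Z, Z \subset X :|: Y & #|Y| <= #|Z|].
Proof.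
move=> KX KY; have [n le_n] : exists n, #|Y| - #|X| <= n by exists (#|Y| - #|X|).
elim: n X KX le_n => [|n IH] X KX le_n.
  by exists X; split; rewrite ?subsetUl //; lia.
have [leYX | ltXY] := leqP #|Y| #|X|; first by exists X; rewrite subsetUl.
have [x /setDP[xY xX] Kx] := indep_aug KX KY ltXY.
have [|Z [KZ sxXZ sZ leYZ]] := IH (x |: X) Kx; first by rewrite cardsU1 xX; lia.
exists Z; split=> //; first exact: subset_trans (subsetUr _ _) sxXZ.
apply: (subset_trans sZ); rewrite subUset subsetUr andbT subUset subsetUl.
by rewrite sub1set inE xY orbT.
Qed.

Section Bases.
Variable U : {set E}.

Lemma basis_add_dep (B : {set E}) (x : E) :
  is_basis K U B -> x \in U -> x \notin B -> ~~ K (x |: B).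
Proof.
move=> [_ [sBU Bmax]] xU xB; apply/negP => Kx.
have sxBU : x |: B \subset U by rewrite subUset sub1set xU.
have /setP/(_ x) := Bmax (x |: B) sxBU Kx (subsetUr _ _).
by rewrite !inE eqxx (negbTE xB).
Qed.

Lemma basis_of_card (B X : {set E}) :
  is_basis K U B -> K X -> X \subset U -> #|B| <= #|X| -> is_basis K U X.
Proof.
move=> Bbas KX sXU leBX; have [KB _] := Bbas.
split=> //; split=> // B' sB'U KB' sXB'.
apply/eqP; rewrite eq_sym eqEcard sXB' /= leqNgt; apply/negP => ltXB'.
have [x /setDP[xB' xB] Kx] := indep_aug KB KB' (leq_ltn_trans leBX ltXB').
by move/negP: (basis_add_dep Bbas (subsetP sB'U x xB') xB).
Qed.

End Bases.

Definition is_circuit (C : {set E}) : Prop :=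
  ~~ K C /\ forall b, b \in C -> K (C :\ b).

Lemma dependent_has_circuit (D : {set E}) : ~~ K D ->
  exists2 C : {set E}, C \subset D & is_circuit C.
Proof.
move=> nKD; pose P (C : {set E}) := (C \subset D) && ~~ K C.
have PD : P D by rewrite /P subxx.
have [C /andP[sCD nKC] Cmin] := arg_minnP (fun C : {set E} => #|C|) PD.
exists C => //; split=> // b bC; apply: contraT => nKCb.
have := Cmin (C :\ b); rewrite /P nKCb (subset_trans (subsetDl _ _) sCD).
by rewrite (cardsD1 b C) bC ltnn => /(_ isT).
Qed.

Lemma circuit_basis_swap (U B C : {set E}) (a b : E) :
  is_basis K U B -> a \notin B -> C \subset a |: B -> is_circuit C ->
  b \in C -> b != a -> K (a |: (B :\ b)).
Proof.
move=> [KB _] aB sCaB [nKC KCb] bC ba.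
have bB : b \in B by move: (subsetP sCaB b bC); rewrite !inE (negbTE ba).
have [Z [KZ sCbZ sZ leBZ]] := indep_extend (KCb b bC) KB.
have bZ : b \notin Z.
  apply: contraNN nKC => bZ; apply: indep_sub KZ; apply/subsetP => x xC.
  by case: (eqVneq x b) => [-> // | xb]; apply: (subsetP sCbZ); rewrite !inE xb.
have sZS : Z \subset a |: (B :\ b).
  apply/subsetP => x xZ; have xb : x != b by apply: contraNneq bZ => <-.
  move: (subsetP sZ x xZ); rewrite !inE xb /= => /orP[xC | ->]; last by rewrite orbT.
  by move: (subsetP sCaB x xC); rewrite !inE.
suff <- : Z = a |: (B :\ b) by [].
apply/eqP; rewrite eqEcard sZS /= cardsU1 !inE (negbTE aB) andbF.
by rewrite (cardsD1 b B) bB in leBZ *.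
Qed.

Lemma min_basis_circuit_cost (R : numDomainType) (c : E -> R)
    (U B C : {set E}) (a b : E) :
  is_min_basis K U c B -> a \in U -> a \notin B -> C \subset a |: B ->
  is_circuit C -> b \in C -> b != a -> (c b <= c a)%R.
Proof.
move=> [Bbas Bmin] aU aB sCaB Ccirc bC ba.
have bB : b \in B by move: (subsetP sCaB b bC); rewrite !inE (negbTE ba).
have aBb : a \notin B :\ b by rewrite inE (negbTE aB) andbF.
have [_ [sBU _]] := Bbas.
have Sbas : is_basis K U (a |: (B :\ b)).
  apply: basis_of_card Bbas (circuit_basis_swap Bbas aB sCaB Ccirc bC ba) _ _.
    by rewrite subUset sub1set aU (subset_trans (subsetDl _ _) sBU).
  by rewrite cardsU1 aBb (cardsD1 b B) bB.
have := Bmin _ Sbas; rewrite /cost big_setU1 //= (big_setD1 b bB) /=.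
by rewrite lerD2r.
Qed.

Lemma circuit_exchange (Delta C : {set E}) (a : E) :
  K Delta -> a \in Delta -> K (C :\ a) ->
  ~~ K C \/ #|Delta :\ a| < #|C :\ a| ->
  exists2 b, b \in C :\: Delta & K (b |: (Delta :\ a)).
Proof.
move=> KD aD KCa hyp; have KDa := indep_sub (subsetDl Delta [set a]) KD.
suff [Z [KZ sZ ltDZ]] : exists Z, [/\ K Z, Z \subset (Delta :\ a) :|: (C :\ a)
                                   & #|Delta :\ a| < #|Z|].
  have [x /setDP[xZ xDa] Kx] := indep_aug KDa KZ ltDZ; exists x => //.
  move: (subsetP sZ x xZ) xDa; rewrite !inE.
  by case: (x == a) => //=; case: (x \in Delta) => //= ->.
have cardDa : #|Delta| = (#|Delta :\ a|).+1 by rewrite (cardsD1 a Delta) aD.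
case: hyp => [nKC | ltCa]; last by exists (C :\ a); rewrite subsetUr.
have [Z [KZ sCaZ sZ leDZ]] := indep_extend KCa KD.
have aZ : a \notin Z.
  apply: contraNN nKC => aZ; apply: indep_sub KZ; apply/subsetP => x xC.
  by case: (eqVneq x a) => [-> // | xa]; apply: (subsetP sCaZ); rewrite !inE xa.
exists Z; split=> //; last by lia.
apply/subsetP => x xZ; have xa : x != a by apply: contraNneq aZ => <-.
by move: (subsetP sZ x xZ); rewrite !inE xa /= orbC.
Qed.

End Matroid.

Lemma trunc_restr_matroid (E : finType) (I : {set E} -> bool) (U : {set E})
    (q : nat) :
  is_matroid I -> is_matroid (trunc_restr I U q).
Proof.
move=> Imat; split.
- by case: Imat => I0 _ _; rewrite /trunc_restr I0 sub0set cards0.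
- move=> A B sBA /and3P[IA sAU cA]; apply/and3P; split.
  + exact: (indep_sub Imat sBA IA).
  + exact: subset_trans sBA sAU.
  + exact: leq_trans (subset_leq_card sBA) cA.
- move=> A B /and3P[IA sAU cA] /and3P[IB sBU cB] ltAB.
  have [x xBA Ix] := indep_aug Imat IA IB ltAB; exists x => //.
  move/setDP: xBA => [xB xA]; apply/and3P; split=> //.
  + by rewrite subUset sub1set (subsetP sBU x xB).
  + by rewrite cardsU1 xA; exact: leq_trans ltAB cB.
Qed.

Theorem mainTheorem11 (R : realFieldType) (E : finType) (I : {set E} -> bool)
  (c : E -> R) (U : {set E}) (q : nat) (B Delta : {set E}) (a : E) :
  is_matroid I ->
  (forall e, (0 <= c e)%R) ->
  is_min_basis (trunc_restr I U q) U c B ->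
  I Delta -> #|Delta| <= q ->
  a \in (Delta :&: U) :\: B ->
  exists2 b, b \in B :\: Delta &
    I (b |: (Delta :\ a)) /\ (c b <= c a)%R.
Proof.
move=> Imat _ Bmin ID cardD; rewrite !inE => /andP[aB /andP[aD aU]].
have Jmat := trunc_restr_matroid U q Imat.
have [[JB [sBU _]] _] := Bmin.
have [C sCaB Ccirc] := dependent_has_circuit (basis_add_dep Bmin.1 aU aB).
have [nJC JCb] := Ccirc.
have aC : a \in C.
  apply: contraNT nJC => aC; apply: (indep_sub Jmat _ JB); apply/subsetP => x xC.
  move: (subsetP sCaB x xC); rewrite !inE => /orP[/eqP xa | //].
  by rewrite -xa xC in aC.
have /and3P[ICa _ _] := JCb a aC.
have sCU : C \subset U.
  by apply: (subset_trans sCaB); rewrite subUset sub1set aU sBU.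
have large : ~~ I C \/ #|Delta :\ a| < #|C :\ a|.
  case: (boolP (I C)) => IC; [right | by left].
  have ltqC : q < #|C| by move: nJC; rewrite /trunc_restr IC sCU /= ltnNge.
  by move: (cardsD1 a C) (cardsD1 a Delta); rewrite aC aD; lia.
have [b /setDP[bC bD] Ib] := circuit_exchange Imat ID aD ICa large.
have ba : b != a by apply: contraNneq bD => ->.
exists b; last split=> //.
- by rewrite inE bD; move: (subsetP sCaB b bC); rewrite !inE (negbTE ba).
- exact: (min_basis_circuit_cost Jmat Bmin aU aB sCaB Ccirc bC ba).
Qed.
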